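(* Let $K=1$ (a control arm $0$ and one arm $1$), $J\ge1$, and suppose $\nu_{a,i}=\mathcal N(\mu_{a,i},\sigma_{a,i}^2)$ with known $\sigma_{a,i}>0$, and $\boldsymbol\mu\in\mathcal L$. Let $\Delta_1=\mu_0-\mu_1$. Then: (1) $T^\star_{\mathrm{agnostic}}(\boldsymbol\mu)=\dfrac{2\left(\sqrt{\sum_{i=1}^J\beta_i^2\sigma_{0,i}^2/\alpha_i}+\sqrt{\sum_{i=1}^J\beta_i^2\sigma_{1,i}^2/\alpha_i}\right)^2}{\Delta_1^2}$, attained at $w^\star_{a,i}=\dfrac{\alpha_i\sqrt{\sum_{j}\beta_j^2\sigma_{a,j}^2/\alpha_j}}{\sqrt{\sum_j\beta_j^2\sigma_{0,j}^2/\alpha_j}+\sqrt{\sum_j\beta_j^2\sigma_{1,j}^2/\alpha_j}}$; (2) $T^\star_{\mathrm{prop}}(\boldsymbol\mu)=\dfrac{2\sum_{i=1}^J\frac{\beta_i^2}{\alpha_i}(\sigma_{0,i}+\sigma_{1,i})^2}{\Delta_1^2}$, attained at $w^\star_{a,i}=\dfrac{\alpha_i\sigma_{a,i}}{\sigma_{0,i}+\sigma_{1,i}}$ for all $i\le J$, $a\in\{0,1\}$; (3) $T^\star_{\mathrm{active}}(\boldsymbol\mu)=\dfrac{2\left(\sum_{i=1}^J|\beta_i|(\sigma_{0,i}+\sigma_{1,i})\right)^2}{\Delta_1^2}$, attained at $w^\star_{a,i}=\dfrac{|\beta_i|\sigma_{a,i}}{\sum_{j=1}^J|\beta_j|(\sigma_{0,j}+\sigma_{1,j})}$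 for all $i\le J$, $a\in\{0,1\}$.
   Context: Arms $a\in\{0,1\}$ (arm $0$ is the control), subpopulations $i\in[J]$; means $\boldsymbol\mu=(\mu_{a,i})$. Known $\boldsymbol\beta\in\mathbb R^J$ and known $\boldsymbol\alpha\in\Sigma_J$ with $\alpha_i>0$ ($\Sigma_n$ the probability simplex). Weighted means $\mu_a=\sum_i\beta_i\mu_{a,i}$, $\lambda_a=\sum_i\beta_i\lambda_{a,i}$. For the Gaussian model, $d_{a,i}(x,y)=(x-y)^2/(2\sigma_{a,i}^2)$ is the KL divergence between $\mathcal N(x,\sigma_{a,i}^2)$ and $\mathcal N(y,\sigma_{a,i}^2)$. $\mathcal L$ is the set of $\boldsymbol\mu\in\mathbb R^{2\times J}$ with $\mu_1\ne\mu_0$; $\mathcal S_{\boldsymbol\beta}(\boldsymbol\mu)=\{a\in\{1\}:\mu_a>\mu_0\}$ and $\mathrm{Alt}_{\boldsymbol\beta}(\boldsymbol\mu)=\{\boldsymbol\lambda\in\mathcal L:\mathcal S_{\boldsymbol\beta}(\boldsymbol\lambda)\ne\mathcal S_{\boldsymbol\beta}(\boldsymbol\mu)\}$. For a constraint set $\mathcal C$, $T^\star(\boldsymbol\mu)^{-1}=\sup_{\mathbf w\in\mathcal C}\inf_{\boldsymbol\lambda\in\mathrm{Alt}_{\boldsymbol\beta}(\boldsymbol\mu)}\sum_{a=0}^1\sum_{i=1}^J w_{a,i}\,d_{a,i}(\mu_{a,i},\lambda_{a,i})$, and $T^\star_{\mathrm{active}},T^\star_{\mathrm{prop}},T^\star_{\mathrm{agnostic}}$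 use respectively $\mathcal C_{\mathrm{active}}=\Sigma_{2J}$, $\mathcal C_{\mathrm{prop}}=\{\mathbf w\in\Sigma_{2J}:w_{0,i}+w_{1,i}=\alpha_i\ \forall i\}$, $\mathcal C_{\mathrm{agnostic}}=\{\mathbf w:w_{a,i}=\alpha_iu_a,\ \mathbf u\in\Sigma_2\}$. ''Attained at $\mathbf w^\star$'' means $\mathbf w^\star$ belongs to the constraint set and achieves the supremum. *)

From HB Require Import structures.
From mathcomp Require Import all_boot all_order all_algebra.
From mathcomp Require Import all_classical all_reals.
Set Implicit Arguments. Unset Strict Implicit. Unset Printing Implicit Defensive.
Import Order.TTheory GRing.Theory Num.Theory.
Local Open Scope ring_scope.
Local Open Scope classical_set_scope.

(* Arms are indexed by 'I_2 (arm 0 = control, arm 1), subpopulations by 'I_J.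
   A mean matrix / allocation is a function 'I_2 -> 'I_J -> R. *)

Section Defs.
Variables (R : realType) (J : nat).

Definition wmean (beta : 'I_J -> R) (mu : 'I_2 -> 'I_J -> R) (a : 'I_2) : R :=
  \sum_(i < J) beta i * mu a i.

(* Gaussian KL divergence d_{a,i}(x,y) = (x-y)^2 / (2 sigma_{a,i}^2) *)
Definition dKL (sigma : 'I_2 -> 'I_J -> R) (a : 'I_2) (i : 'I_J) (x y : R) : R :=
  (x - y) ^+ 2 / (2 * sigma a i ^+ 2).

Definition Lset (beta : 'I_J -> R) : set ('I_2 -> 'I_J -> R) :=
  [set mu | wmean beta mu 1 != wmean beta mu 0].

Definition Sbeta (beta : 'I_J -> R) (mu : 'I_2 -> 'I_J -> R) : {set 'I_2} :=
  [set a : 'I_2 | (a != 0) && (wmean beta mu 0 < wmean beta mu a)].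

Definition Alt (beta : 'I_J -> R) (mu : 'I_2 -> 'I_J -> R) : set ('I_2 -> 'I_J -> R) :=
  [set lam | Lset beta lam /\ Sbeta beta lam != Sbeta beta mu].

Definition inner (beta : 'I_J -> R) (sigma : 'I_2 -> 'I_J -> R)
  (mu w : 'I_2 -> 'I_J -> R) : R :=
  inf [set \sum_(a < 2) \sum_(i < J) w a i * dKL sigma a i (mu a i) (lam a i)
      | lam in Alt beta mu].

Definition Tinv (C : set ('I_2 -> 'I_J -> R)) (beta : 'I_J -> R)
  (sigma : 'I_2 -> 'I_J -> R) (mu : 'I_2 -> 'I_J -> R) : R :=
  sup [set inner beta sigma mu w | w in C].

Definition Tstar C beta sigma mu : R := (Tinv C beta sigma mu)^-1.

Definition C_active : set ('I_2 -> 'I_J -> R) :=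
  [set w | (forall a i, 0 <= w a i) /\ \sum_(a < 2) \sum_(i < J) w a i = 1].

Definition C_prop (alpha : 'I_J -> R) : set ('I_2 -> 'I_J -> R) :=
  [set w | C_active w /\ forall i, w 0 i + w 1 i = alpha i].

Definition C_agnostic (alpha : 'I_J -> R) : set ('I_2 -> 'I_J -> R) :=
  [set w | exists u : 'I_2 -> R,
     ((forall a, 0 <= u a) /\ \sum_(a < 2) u a = 1) /\
     forall a i, w a i = alpha i * u a].

End Defs.

From HB Require Import structures.
From mathcomp Require Import all_boot all_order all_algebra.
From mathcomp Require Import all_classical all_reals.
From mathcomp Require Import ring lra.
Import Order.TTheory GRing.Theory Num.Theory.
Local Open Scope ring_scope.
Local Open Scope classical_set_scope.
Set Implicit Arguments. Unset Strict Implicit. Unset Printing Implicit Defensive.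

(* For an allocation w let V(w) = sum_{a,i} beta_i^2 sigma_{a,i}^2 / w_{a,i}.  Completing the
   square in each cell shows that every alternative lambda costs at least Delta^2 / (2 V(w)), and
   the explicit shift [alt_dir w] of mu, pushed just past the boundary of Alt, shows that this is
   the infimum.  For the announced allocation ws, the cost of the single shift [alt_dir ws] under
   any other allocation w of the constraint set is proportional to <w, -grad V(ws)>, which the
   first-order optimality of ws bounds by <ws, -grad V(ws)> = V(ws).  So (ws, alt_dir ws) is a
   saddle point and T^-1 = Delta^2 / (2 V(ws)). *)

Lemma sum_ord2 (V : nmodType) (F : 'I_2 -> V) : \sum_(a < 2) F a = F 0 + F 1.
Proof. by rewrite !big_ord_recl big_ord0 addr0; congr (F _ + F _); apply/val_inj. Qed.

Lemma psumr_gt0 (R : numDomainType) (I : finType) (F : I -> R) j :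
  (forall i, 0 <= F i) -> 0 < F j -> 0 < \sum_i F i.
Proof. by move=> F_ge0 Fj_gt0; rewrite (bigD1 j) //= ltr_pwDl // sumr_ge0. Qed.

Lemma amgm_weighted (R : realFieldType) (w b x k s : R) :
  0 < s -> 0 <= w -> (w = 0 -> b = 0) ->
  k * b * x <= w * (x ^+ 2 / (2 * s ^+ 2)) + k ^+ 2 * (b ^+ 2 * s ^+ 2 / w) / 2.
Proof.
move=> s_gt0 w_ge0 w0_b0; have [w0|w_neq0] := eqVneq w 0.
  by rewrite w0 (w0_b0 w0) invr0 !(mulr0, mul0r, add0r).
have w_gt0 : 0 < w by rewrite lt_def w_neq0.
rewrite -subr_ge0.
have -> : w * (x ^+ 2 / (2 * s ^+ 2)) + k ^+ 2 * (b ^+ 2 * s ^+ 2 / w) / 2 - k * b * x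
    = (w * x - k * b * s ^+ 2) ^+ 2 / (2 * s ^+ 2 * w).
  by field; rewrite w_neq0 gt_eqF.
by rewrite divr_ge0 ?sqr_ge0 // !mulr_ge0 ?sqr_ge0 ?ltW.
Qed.

Lemma le_of_forall_gt1_sqr_mul (R : rcfType) (x c : R) : 0 <= c ->
  (forall t, 1 < t -> x <= t ^+ 2 * c) -> x <= c.
Proof.
move=> c_ge0 x_le; apply/ler_addgt0Pr => e e_gt0.
have q_gt0 : 0 < e / (c + 1) by rewrite divr_gt0 // ltr_wpDl.
have q_mul : e / (c + 1) * (c + 1) = e by rewrite divfK // gt_eqF // ltr_wpDl.
have := x_le (Num.sqrt (1 + e / (c + 1))).
rewrite sqr_sqrtr; last by lra.
rewrite -[X in X < _]sqrtr1 ltr_sqrt; last by lra.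
move=> /(_ ltac:(lra)); nra.
Qed.

Lemma sup_attained (R : realType) (E : set R) x : E x -> ubound E x -> sup E = x.
Proof.
move=> Ex x_ub; apply/eqP; rewrite eq_le ge_sup //=; last by exists x.
by apply: sup_upper_bound => //; split; exists x.
Qed.

Section AlternativeSet.
Variables (R : realType) (J : nat) (beta : 'I_J -> R) (mu : 'I_2 -> 'I_J -> R).
Hypothesis mu_in_L : Lset beta mu.

Lemma Sbeta_eqE (lam : 'I_2 -> 'I_J -> R) :
  (Sbeta beta lam == Sbeta beta mu) =
  ((wmean beta lam 0 < wmean beta lam 1) == (wmean beta mu 0 < wmean beta mu 1)).
Proof.
apply/eqP/eqP => [/setP/(_ 1)|E]; first by rewrite !inE.
apply/setP => a; rewrite !inE; case: (unliftP 0 a) => [b ->|->] //=.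
by rewrite ord1 (_ : lift 0 0 = 1) ?E //; apply/val_inj.
Qed.

Lemma AltE lam : Alt beta mu lam <->
  (wmean beta lam 1 - wmean beta lam 0) * (wmean beta mu 1 - wmean beta mu 0) < 0.
Proof.
move: mu_in_L; rewrite /Alt /Lset /= Sbeta_eqE.
rewrite -[wmean beta lam 1 == _]subr_eq0 -[wmean beta mu 1 == _]subr_eq0.
rewrite -[wmean beta lam 0 < _]subr_gt0 -[wmean beta mu 0 < _]subr_gt0.
move: (_ - _) (_ - _) => l m m_neq0; split => [[l_neq0 lm]|lm].
  by case: (ltrgtP l 0) l_neq0 lm; case: (ltrgtP m 0) m_neq0 => // *; nra.
split; first by apply: contraTneq lm => ->; rewrite mul0r ltxx.
by case: (ltrgtP l 0) lm; case: (ltrgtP m 0) => // *; nra.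
Qed.

Lemma exists_beta_neq0 : exists j, beta j != 0.
Proof.
apply/not_existsP => beta0; move: mu_in_L; rewrite /Lset /= /wmean.
by rewrite !big1 ?eqxx // => i _; move/negP/negPn/eqP: (beta0 i) ->; rewrite mul0r.
Qed.

End AlternativeSet.

Section GaussianBounds.
Variables (R : realType) (J : nat) (beta : 'I_J -> R) (sigma mu : 'I_2 -> 'I_J -> R).
Hypothesis sigma_gt0 : forall a i, 0 < sigma a i.
Hypothesis mu_in_L : Lset beta mu.

Definition gap := wmean beta mu 0 - wmean beta mu 1.

Definition pairing (w g : 'I_2 -> 'I_J -> R) := \sum_(a < 2) \sum_(i < J) w a i * g a i.

Definition cost (w lam : 'I_2 -> 'I_J -> R) :=
  pairing w (fun a i => dKL sigma a i (mu a i) (lam a i)).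

(* A cell with w a i = 0 contributes 0 (x / 0 = 0), hence the hypothesis
   w a i = 0 -> beta i = 0 in [cost_ge_Alt]. *)
Definition avar (w : 'I_2 -> 'I_J -> R) :=
  \sum_(a < 2) \sum_(i < J) beta i ^+ 2 * sigma a i ^+ 2 / w a i.

(* Minus the gradient of [avar] at w. *)
Definition avar_slope (w : 'I_2 -> 'I_J -> R) a i :=
  beta i ^+ 2 * sigma a i ^+ 2 / w a i ^+ 2.

Definition arm_sign (a : 'I_2) : R := if a == 0 then -1 else 1.

(* The equality case of [cost_ge_Alt]: the cheapest way for the alternative to close the gap. *)
Definition alt_dir (w : 'I_2 -> 'I_J -> R) a i :=
  arm_sign a * gap * beta i * sigma a i ^+ 2 / (w a i * avar w).

Lemma gap_neq0 : gap != 0.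
Proof. by move: mu_in_L; rewrite /Lset /= /gap subr_eq0 eq_sym. Qed.

Lemma arm_sign_sqr a : arm_sign a ^+ 2 = 1.
Proof. by rewrite /arm_sign; case: ifP; rewrite ?sqrrN expr1n. Qed.

Lemma sum_arm_sign (d : 'I_2 -> 'I_J -> R) :
  \sum_(a < 2) \sum_(i < J) arm_sign a * beta i * d a i =
  \sum_(i < J) beta i * (d 1 i - d 0 i).
Proof. by rewrite sum_ord2 -big_split; apply: eq_bigr => i _; rewrite /arm_sign /=; ring. Qed.

Lemma pairing_ge0 w g : (forall a i, 0 <= w a i) -> (forall a i, 0 <= g a i) ->
  0 <= pairing w g.
Proof. by move=> w_ge0 g_ge0; do 2![apply: sumr_ge0 => ? _]; rewrite mulr_ge0. Qed.

Lemma pairingZr w g k : pairing w (fun a i => k * g a i) = k * pairing w g.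
Proof.
rewrite /pairing mulr_sumr; apply: eq_bigr => a _.
by rewrite mulr_sumr; apply: eq_bigr => i _; rewrite mulrCA.
Qed.

Lemma avarE w : avar w = pairing w (avar_slope w).
Proof.
apply: eq_bigr => a _; apply: eq_bigr => i _; rewrite /avar_slope.
have [->|w_neq0] := eqVneq (w a i) 0; last by field.
by rewrite expr0n /= invr0 !(mulr0, mul0r).
Qed.

Lemma avar_ge0 w : (forall a i, 0 <= w a i) -> 0 <= avar w.
Proof.
move=> w_ge0; rewrite /avar; do 2![apply: sumr_ge0 => ? _].
by rewrite divr_ge0 ?w_ge0 // mulr_ge0 ?sqr_ge0.
Qed.

Lemma dKL_ge0 a i x y : 0 <= dKL sigma a i x y.
Proof. by rewrite divr_ge0 ?sqr_ge0 // mulr_ge0 ?sqr_ge0. Qed.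

Lemma cost_ge_Alt w lam : (forall a i, 0 <= w a i) ->
  (forall a i, w a i = 0 -> beta i = 0) -> Alt beta mu lam ->
  gap ^+ 2 / (2 * avar w) <= cost w lam.
Proof.
move=> w_ge0 w0_beta0 /(AltE mu_in_L).
set l := _ - _; set m := _ - _ => lm_lt0.
have [V0|V_gt0] := eqVneq (avar w) 0.
  by rewrite V0 mulr0 invr0 mulr0 pairing_ge0 // => *; apply: dKL_ge0.
have {}V_gt0 : 0 < avar w by rewrite lt_def V_gt0 avar_ge0.
set k := m / avar w.
have young : k * (m - l) <= cost w lam + k ^+ 2 * avar w / 2.
  have -> : m - l = \sum_(a < 2) \sum_(i < J) arm_sign a * beta i * (mu a i - lam a i).
    by rewrite sum_arm_sign /l /m /wmean -!sumrB; apply: eq_bigr => i _; ring.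
  rewrite /cost /pairing /avar !mulr_sumr !mulr_suml -big_split; apply: ler_sum => a _.
  rewrite !mulr_sumr !mulr_suml -big_split; apply: ler_sum => i _.
  have w0_b0 : w a i = 0 -> arm_sign a * beta i = 0 by move/w0_beta0 ->; rewrite mulr0.
  have := amgm_weighted (mu a i - lam a i) k (sigma_gt0 a i) (w_ge0 a i) w0_b0.
  by rewrite [(arm_sign a * beta i) ^+ 2]exprMn arm_sign_sqr mul1r /dKL !mulrA.
have gapE : gap = - m by rewrite /gap /m opprB.
rewrite gapE sqrrN; apply: le_trans (_ : k * (m - l) - k ^+ 2 * avar w / 2 <= _); last by lra.
rewrite -subr_ge0 (_ : _ - _ = - (l * m) / avar w); last by rewrite /k; field; rewrite gt_eqF.
by rewrite divr_ge0 ?oppr_ge0 ?ltW.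
Qed.

Lemma cost_ge0 w lam : (forall a i, 0 <= w a i) -> 0 <= cost w lam.
Proof. by move=> w_ge0; apply: pairing_ge0 => // *; apply: dKL_ge0. Qed.

Lemma cost_shiftZ w d t :
  cost w (fun a i => mu a i + t * d a i) = t ^+ 2 * cost w (fun a i => mu a i + d a i).
Proof.
by rewrite /cost -pairingZr; apply: eq_bigr => a _; apply: eq_bigr => i _; rewrite /dKL; ring.
Qed.

Lemma shift_in_Alt d t : \sum_(i < J) beta i * (d 1 i - d 0 i) = gap -> 1 < t ->
  Alt beta mu (fun a i => mu a i + t * d a i).
Proof.
move=> d_gap t_gt1; apply/(AltE mu_in_L).
rewrite (_ : _ - _ = (1 - t) * (wmean beta mu 1 - wmean beta mu 0)).
  have m_neq0 : wmean beta mu 1 - wmean beta mu 0 != 0 by rewrite -oppr_eq0 opprB gap_neq0.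
  by rewrite -mulrA -expr2 pmulr_llt0 ?subr_lt0 // exprn_even_gt0.
have -> : (1 - t) * (wmean beta mu 1 - wmean beta mu 0) =
    wmean beta mu 1 - wmean beta mu 0 + t * gap by rewrite /gap; ring.
by rewrite -d_gap /wmean -!sumrB mulr_sumr -big_split; apply: eq_bigr => i _ /=; ring.
Qed.

Lemma inner_le_cost_shift w d : (forall a i, 0 <= w a i) ->
  \sum_(i < J) beta i * (d 1 i - d 0 i) = gap ->
  inner beta sigma mu w <= cost w (fun a i => mu a i + d a i).
Proof.
(* mu + d has equal weighted means, so it is only a limit of alternatives mu + t d, t > 1. *)
move=> w_ge0 d_gap; apply: le_of_forall_gt1_sqr_mul; first exact: cost_ge0.
move=> t t_gt1; rewrite -cost_shiftZ; apply: ge_inf.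
  by exists 0 => _ [lam _ <-]; apply: cost_ge0.
by exists (fun a i => mu a i + t * d a i) => //; apply: shift_in_Alt.
Qed.

Lemma sum_beta_alt_dir w : avar w != 0 ->
  \sum_(i < J) beta i * (alt_dir w 1 i - alt_dir w 0 i) = gap.
Proof.
move=> V_neq0; rewrite -[RHS](divfK V_neq0) {2}/avar sum_ord2 -big_split mulr_sumr.
apply: eq_bigr => i _; rewrite /alt_dir /arm_sign /= !invfM.
by move: (w 0 i)^-1 (w 1 i)^-1 (avar w)^-1 => p0 p1 q; ring.
Qed.

Lemma cost_alt_dir w w' : cost w' (fun a i => mu a i + alt_dir w a i) =
  gap ^+ 2 / (2 * avar w ^+ 2) * pairing w' (avar_slope w).
Proof.
rewrite /cost -pairingZr; apply: eq_bigr => a _; apply: eq_bigr => i _.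
rewrite /dKL /alt_dir /avar_slope [(w a i * avar w)^-1]invfM [(2 * avar w ^+ 2)^-1]invfM.
rewrite -[(w a i ^+ 2)^-1]exprVn -[(avar w ^+ 2)^-1]exprVn.
move: (w a i)^-1 (avar w)^-1 => p q.
by rewrite /arm_sign; case: ifP => _; field; rewrite gt_eqF.
Qed.

Lemma saddle_point (C : set ('I_2 -> 'I_J -> R)) ws V :
  C ws -> (forall w, C w -> forall a i, 0 <= w a i) ->
  (forall a i, ws a i = 0 -> beta i = 0) -> 0 < V ->
  pairing ws (avar_slope ws) = V ->
  (forall w, C w -> pairing w (avar_slope ws) <= V) ->
  [/\ inner beta sigma mu ws = gap ^+ 2 / (2 * V),
      Tinv C beta sigma mu = gap ^+ 2 / (2 * V) &
      Tstar C beta sigma mu = 2 * V / gap ^+ 2].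
Proof.
move=> Cws C_ge0 ws0_beta0 V_gt0 wsV C_le.
have avar_ws : avar ws = V by rewrite avarE.
have V_neq0 : avar ws != 0 by rewrite avar_ws gt_eqF.
have d_gap := sum_beta_alt_dir V_neq0.
have inner_le w : C w -> inner beta sigma mu w <= gap ^+ 2 / (2 * V).
  move=> Cw; apply: le_trans (inner_le_cost_shift (C_ge0 _ Cw) d_gap) _.
  rewrite cost_alt_dir avar_ws.
  have -> : gap ^+ 2 / (2 * V) = gap ^+ 2 / (2 * V ^+ 2) * V by field; rewrite gt_eqF.
  by rewrite ler_wpM2l ?C_le // divr_ge0 ?sqr_ge0 // mulr_ge0 // sqr_ge0.
have inner_ws : inner beta sigma mu ws = gap ^+ 2 / (2 * V).
  apply/eqP; rewrite eq_le inner_le //=; apply: lb_le_inf.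
    exists (cost ws (fun a i => mu a i + 2 * alt_dir ws a i)).
    by exists (fun a i => mu a i + 2 * alt_dir ws a i) => //; apply: shift_in_Alt => //; lra.
  by move=> _ [lam Alt_lam <-]; rewrite -avar_ws; apply: cost_ge_Alt => //; apply: C_ge0.
have Tinv_C : Tinv C beta sigma mu = gap ^+ 2 / (2 * V).
  rewrite -inner_ws; apply: sup_attained; first by exists ws.
  by move=> _ [w Cw <-]; rewrite inner_ws inner_le.
by split => //; rewrite /Tstar Tinv_C invf_div.
Qed.

End GaussianBounds.

Section ActiveSampling.
Variables (R : realType) (J : nat) (beta : 'I_J -> R) (sigma mu : 'I_2 -> 'I_J -> R).
Hypothesis sigma_gt0 : forall a i, 0 < sigma a i.
Hypothesis mu_in_L : Lset beta mu.

Definition Z_active := \sum_(j < J) `|beta j| * (sigma 0 j + sigma 1 j).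
Definition w_active a i := `|beta i| * sigma a i / Z_active.

Lemma Z_active_gt0 : 0 < Z_active.
Proof.
have [j beta_j] := exists_beta_neq0 mu_in_L.
apply: (psumr_gt0 (j := j)) => [i|]; rewrite ?mulr_gt0 ?mulr_ge0 ?normr_gt0 ?addr_gt0 //.
by rewrite addr_ge0 ?ltW.
Qed.

Lemma w_active_ge0 a i : 0 <= w_active a i.
Proof. by rewrite divr_ge0 ?mulr_ge0 ?normr_ge0 ?ltW ?Z_active_gt0. Qed.

Lemma w_active_eq0 a i : w_active a i = 0 -> beta i = 0.
Proof.
move/eqP; rewrite !mulf_eq0 invr_eq0 normr_eq0 (gt_eqF Z_active_gt0) (gt_eqF (sigma_gt0 a i)).
by rewrite !orbF => /eqP.
Qed.

Lemma sum_w_active : \sum_(a < 2) \sum_(i < J) w_active a i = 1.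
Proof.
rewrite sum_ord2 -big_split -[RHS](divff (lt0r_neq0 Z_active_gt0)) mulr_suml.
by apply: eq_bigr => i _ /=; rewrite /w_active; ring.
Qed.

Lemma avar_slope_active a i :
  avar_slope beta sigma w_active a i = (beta i != 0)%:R * Z_active ^+ 2.
Proof.
rewrite /avar_slope /w_active; have [->|beta_i] := eqVneq (beta i) 0.
  by rewrite expr0n /= !mul0r.
rewrite mul1r -(real_normK (num_real (beta i))); field.
by rewrite (lt0r_neq0 Z_active_gt0) (lt0r_neq0 (sigma_gt0 a i)) normr_eq0 beta_i.
Qed.

Lemma pairing_active_le w : C_active w ->
  pairing w (avar_slope beta sigma w_active) <= Z_active ^+ 2.
Proof.
move=> [w_ge0 w_sum1]; rewrite -[leRHS]mulr1 -w_sum1 mulr_sumr.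
apply: ler_sum => a _; rewrite mulr_sumr; apply: ler_sum => i _.
rewrite avar_slope_active mulrC ler_wpM2r //.
by rewrite -[leRHS]mul1r ler_wpM2r ?sqr_ge0 // lern1 leq_b1.
Qed.

Lemma pairing_active_eq : pairing w_active (avar_slope beta sigma w_active) = Z_active ^+ 2.
Proof.
rewrite -[RHS]mulr1 -sum_w_active mulr_sumr; apply: eq_bigr => a _.
rewrite mulr_sumr; apply: eq_bigr => i _; rewrite avar_slope_active.
have [beta0|beta_i] := eqVneq (beta i) 0.
  by rewrite /w_active beta0 normr0 !mul0r mulr0.
by rewrite mul1r mulrC.
Qed.

Lemma active_optimal :
  Tstar (@C_active R J) beta sigma mu = 2 * Z_active ^+ 2 / gap beta mu ^+ 2
  /\ C_active w_active
  /\ inner beta sigma mu w_active = Tinv (@C_active R J) beta sigma mu.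
Proof.
have C_w : C_active w_active by split; [exact: w_active_ge0 | exact: sum_w_active].
have [inner_w Tinv_C Tstar_C] := saddle_point sigma_gt0 mu_in_L C_w (fun w Cw => proj1 Cw)
  w_active_eq0 (exprn_gt0 2 Z_active_gt0) pairing_active_eq pairing_active_le.
by rewrite inner_w Tinv_C.
Qed.

End ActiveSampling.

Section ProportionalSampling.
Variables (R : realType) (J : nat) (alpha beta : 'I_J -> R) (sigma mu : 'I_2 -> 'I_J -> R).
Hypothesis alpha_gt0 : forall i, 0 < alpha i.
Hypothesis alpha_sum1 : \sum_(i < J) alpha i = 1.
Hypothesis sigma_gt0 : forall a i, 0 < sigma a i.
Hypothesis mu_in_L : Lset beta mu.

Definition V_prop := \sum_(i < J) beta i ^+ 2 / alpha i * (sigma 0 i + sigma 1 i) ^+ 2.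
Definition w_prop a i := alpha i * sigma a i / (sigma 0 i + sigma 1 i).

Let alpha_neq0 i : alpha i != 0. Proof. exact: lt0r_neq0. Qed.
Let sigma_neq0 a i : sigma a i != 0. Proof. exact: lt0r_neq0. Qed.
Let sigma_sum_neq0 i : sigma 0 i + sigma 1 i != 0.
Proof. by rewrite lt0r_neq0 ?addr_gt0. Qed.

Lemma V_prop_gt0 : 0 < V_prop.
Proof.
have [j beta_j] := exists_beta_neq0 mu_in_L.
apply: (psumr_gt0 (j := j)) => [i|].
  by rewrite mulr_ge0 ?sqr_ge0 // divr_ge0 ?sqr_ge0 ?ltW.
by rewrite mulr_gt0 ?divr_gt0 ?exprn_even_gt0 ?sigma_sum_neq0.
Qed.

Lemma w_prop_gt0 a i : 0 < w_prop a i.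
Proof. by rewrite divr_gt0 ?mulr_gt0 ?addr_gt0. Qed.

Lemma w_prop_in_C : C_prop alpha w_prop.
Proof.
have w_prop_sum i : w_prop 0 i + w_prop 1 i = alpha i by rewrite /w_prop; field.
split=> //; split => [a i|]; first exact/ltW/w_prop_gt0.
by rewrite sum_ord2 -big_split -alpha_sum1; apply: eq_bigr => i _ /=.
Qed.

Lemma avar_slope_prop a i :
  avar_slope beta sigma w_prop a i = beta i ^+ 2 * (sigma 0 i + sigma 1 i) ^+ 2 / alpha i ^+ 2.
Proof. by rewrite /avar_slope /w_prop; field; rewrite alpha_neq0 sigma_neq0 sigma_sum_neq0. Qed.

Lemma pairing_prop w : C_prop alpha w -> pairing w (avar_slope beta sigma w_prop) = V_prop.
Proof.
move=> [_ w_alpha]; rewrite /pairing sum_ord2 -big_split; apply: eq_bigr => i _ /=.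
by rewrite !avar_slope_prop -mulrDl w_alpha; field.
Qed.

Lemma prop_optimal :
  Tstar (C_prop alpha) beta sigma mu = 2 * V_prop / gap beta mu ^+ 2
  /\ C_prop alpha w_prop
  /\ inner beta sigma mu w_prop = Tinv (C_prop alpha) beta sigma mu.
Proof.
have w_prop_eq0 a i : w_prop a i = 0 -> beta i = 0.
  by move=> w0; move: (w_prop_gt0 a i); rewrite w0 ltxx.
have pairing_le w : C_prop alpha w -> pairing w (avar_slope beta sigma w_prop) <= V_prop.
  by move/pairing_prop ->.
have C_w := w_prop_in_C.
have [inner_w Tinv_C Tstar_C] := saddle_point sigma_gt0 mu_in_L C_w
  (fun w Cw => proj1 (proj1 Cw)) w_prop_eq0 V_prop_gt0 (pairing_prop C_w) pairing_le.
by rewrite inner_w Tinv_C.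
Qed.

End ProportionalSampling.

Section AgnosticSampling.
Variables (R : realType) (J : nat) (alpha beta : 'I_J -> R) (sigma mu : 'I_2 -> 'I_J -> R).
Hypothesis alpha_gt0 : forall i, 0 < alpha i.
Hypothesis sigma_gt0 : forall a i, 0 < sigma a i.
Hypothesis mu_in_L : Lset beta mu.

Definition sd_agnostic a := Num.sqrt (\sum_(j < J) beta j ^+ 2 * sigma a j ^+ 2 / alpha j).
Definition w_agnostic a i := alpha i * sd_agnostic a / (sd_agnostic 0 + sd_agnostic 1).

Let alpha_neq0 i : alpha i != 0. Proof. exact: lt0r_neq0. Qed.

Let var_term_ge0 a j : 0 <= beta j ^+ 2 * sigma a j ^+ 2 / alpha j.
Proof. exact: divr_ge0 (mulr_ge0 (sqr_ge0 _) (sqr_ge0 _)) (ltW (alpha_gt0 j)). Qed.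

Lemma sd_agnostic_sqr a : sd_agnostic a ^+ 2 = \sum_(j < J) beta j ^+ 2 * sigma a j ^+ 2 / alpha j.
Proof. by rewrite sqr_sqrtr ?sumr_ge0. Qed.

Lemma sd_agnostic_gt0 a : 0 < sd_agnostic a.
Proof.
have [j beta_j] := exists_beta_neq0 mu_in_L.
rewrite sqrtr_gt0; apply: (psumr_gt0 (j := j)) => //.
by rewrite divr_gt0 // mulr_gt0 // exprn_even_gt0 // lt0r_neq0.
Qed.

Let sd_agnostic_neq0 a : sd_agnostic a != 0. Proof. exact/lt0r_neq0/sd_agnostic_gt0. Qed.
Let sd_agnostic_sum_gt0 : 0 < sd_agnostic 0 + sd_agnostic 1. Proof. by rewrite addr_gt0 ?sd_agnostic_gt0. Qed.
Let sd_agnostic_sum_neq0 : sd_agnostic 0 + sd_agnostic 1 != 0. Proof. exact: lt0r_neq0. Qed.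

Lemma w_agnostic_gt0 a i : 0 < w_agnostic a i.
Proof. by rewrite divr_gt0 ?mulr_gt0 ?sd_agnostic_gt0. Qed.

Lemma w_agnostic_in_C : C_agnostic alpha w_agnostic.
Proof.
exists (fun a => sd_agnostic a / (sd_agnostic 0 + sd_agnostic 1)); split; last by move=> a i; rewrite mulrA.
split; first by move=> a; rewrite divr_ge0 ?ltW ?sd_agnostic_gt0.
by rewrite sum_ord2 -mulrDl divff.
Qed.

Lemma pairing_agnostic w : C_agnostic alpha w ->
  pairing w (avar_slope beta sigma w_agnostic) = (sd_agnostic 0 + sd_agnostic 1) ^+ 2.
Proof.
move=> [u [[_ u_sum1] w_u]]; rewrite -[RHS]mul1r -u_sum1 mulr_suml /pairing.
apply: eq_bigr => a _.
transitivity (u a * (sd_agnostic 0 + sd_agnostic 1) ^+ 2 / sd_agnostic a ^+ 2 *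
              \sum_(j < J) beta j ^+ 2 * sigma a j ^+ 2 / alpha j).
  rewrite mulr_sumr; apply: eq_bigr => i _; rewrite w_u /avar_slope /w_agnostic.
  by field; rewrite alpha_neq0 sd_agnostic_neq0 sd_agnostic_sum_neq0.
by rewrite -sd_agnostic_sqr; field.
Qed.

Lemma agnostic_optimal :
  Tstar (C_agnostic alpha) beta sigma mu =
    2 * (sd_agnostic 0 + sd_agnostic 1) ^+ 2 / gap beta mu ^+ 2
  /\ C_agnostic alpha w_agnostic
  /\ inner beta sigma mu w_agnostic = Tinv (C_agnostic alpha) beta sigma mu.
Proof.
have C_ge0 w : C_agnostic alpha w -> forall a i, 0 <= w a i.
  by move=> [u [[u_ge0 _] w_u]] a i; rewrite w_u mulr_ge0 ?u_ge0 // ltW.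
have w_agnostic_eq0 a i : w_agnostic a i = 0 -> beta i = 0.
  by move=> w0; move: (w_agnostic_gt0 a i); rewrite w0 ltxx.
have pairing_le w : C_agnostic alpha w ->
    pairing w (avar_slope beta sigma w_agnostic) <= (sd_agnostic 0 + sd_agnostic 1) ^+ 2.
  by move/pairing_agnostic ->.
have C_w := w_agnostic_in_C.
have [inner_w Tinv_C Tstar_C] := saddle_point sigma_gt0 mu_in_L C_w C_ge0 w_agnostic_eq0
  (exprn_gt0 2 sd_agnostic_sum_gt0) (pairing_agnostic C_w) pairing_le.
by rewrite inner_w Tinv_C.
Qed.

End AgnosticSampling.

Theorem proposition2 (R : realType) (J : nat) (hJ : (0 < J)%N)
  (alpha beta : 'I_J -> R) (sigma mu : 'I_2 -> 'I_J -> R)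
  (halpha_pos : forall i, 0 < alpha i) (halpha_sum : \sum_(i < J) alpha i = 1)
  (hsigma : forall a i, 0 < sigma a i)
  (hmu : Lset beta mu) :
  let Delta1 := wmean beta mu 0 - wmean beta mu 1 in
  let s := fun a : 'I_2 =>
    Num.sqrt (\sum_(j < J) beta j ^+ 2 * sigma a j ^+ 2 / alpha j) in
  let wag := fun (a : 'I_2) (i : 'I_J) => alpha i * s a / (s 0 + s 1) in
  let wpr := fun (a : 'I_2) (i : 'I_J) => alpha i * sigma a i / (sigma 0 i + sigma 1 i) in
  let Z := \sum_(j < J) `|beta j| * (sigma 0 j + sigma 1 j) in
  let wac := fun (a : 'I_2) (i : 'I_J) => `|beta i| * sigma a i / Z in
  [/\
   (* (1) agnostic *)
   Tstar (C_agnostic alpha) beta sigma mu = 2 * (s 0 + s 1) ^+ 2 / Delta1 ^+ 2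
   /\ C_agnostic alpha wag
   /\ inner beta sigma mu wag = Tinv (C_agnostic alpha) beta sigma mu,
   (* (2) proportional *)
   Tstar (C_prop alpha) beta sigma mu =
     2 * (\sum_(i < J) beta i ^+ 2 / alpha i * (sigma 0 i + sigma 1 i) ^+ 2)
       / Delta1 ^+ 2
   /\ C_prop alpha wpr
   /\ inner beta sigma mu wpr = Tinv (C_prop alpha) beta sigma mu
  & (* (3) active *)
   Tstar (@C_active R J) beta sigma mu = 2 * Z ^+ 2 / Delta1 ^+ 2
   /\ C_active wac
   /\ inner beta sigma mu wac = Tinv (@C_active R J) beta sigma mu].
Proof.
split.
- exact: agnostic_optimal halpha_pos hsigma hmu.
- exact: prop_optimal halpha_pos halpha_sum hsigma hmu.
- exact: active_optimal hsigma hmu.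
Qed.
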